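(* Let $N,n,m,p$ be positive integers, $A\in\mathbb{R}^{n\times n}$, $B\in\mathbb{R}^{n\times p}$, $C\in\mathbb{R}^{m\times n}$, $H\in\mathbb{R}^{n\times m}$, $W=[w_{ij}]\in\mathbb{R}^{N\times N}$ with $w_{ii}=0$ for all $i$, $\Delta=\mathrm{diag}(\delta_1,\dots,\delta_N)$ with $\delta_i\in\{0,1\}$, and $h>0$. Put $\mathcal{B}(h)=\int_0^h e^{A\tau}d\tau\,B$, $\mathcal{H}(h)=\int_0^h e^{A\tau}d\tau\,HC$, $\Phi_s=I_N\otimes e^{Ah}+W\otimes\mathcal{H}(h)$, $\Psi_s=\Delta\otimes\mathcal{B}(h)$. Assume $W$ is diagonalizable, and let $v_1,\dots,v_N\in\mathbb{C}^{1\times N}$ be linearly independent row vectors with $v_kW=\lambda_kv_k$ ($\lambda_1,\dots,\lambda_N$ the eigenvalues of $W$ listed with multiplicity). For $k=1,\dots,N$ let $E_k=e^{Ah}+\lambda_k\mathcal{H}(h)$. Suppose that: (1) the pair $(W,\Delta)$ is controllable; (2) the pair $(E_k,\mathcal{B}(h))$ is controllable for every $k=1,\dots,N$; (3) whenever $\theta\in\mathbb{C}$ is a common eigenvalue of $E_{k_1},\dots,E_{k_q}$ for distinct indices $k_1,\dots,k_q\in\{1,\dots,N\}$ with $1<q\le N$, then $(v_{k_1}\otimes\xi_{k_1}+\dots+v_{k_q}\otimes\xi_{k_q})(\Delta\otimes\mathcal{B}(h))\neq0$ for all $\xi_j\in M(\theta\,|\,E_j)$, $j=k_1,\dots,k_q$,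 with $(\xi_{k_1},\dots,\xi_{k_q})\neq0$. Then the networked sampled-data system $X(k+1)=\Phi_sX(k)+\Psi_sU(k)$ is controllable.
   Context: The networked sampled-data system is the discrete-time system $X(k+1)=\Phi_sX(k)+\Psi_sU(k)$, $X(k)\in\mathbb{R}^{Nn}$, $U(k)\in\mathbb{R}^{Np}$; it is called controllable if every initial state can be steered to the origin in finitely many steps. For $F\in\mathbb{C}^{q\times q}$ and $G\in\mathbb{C}^{q\times s}$, the pair $(F,G)$ is called controllable if $\mathrm{rank}[sI_q-F,\ G]=q$ for every $s\in\mathbb{C}$. For a square matrix $E$ and $\theta\in\mathbb{C}$, $M(\theta\,|\,E)=\{\xi \text{ row vector}:\ \xi E=\theta\xi\}$ is the left eigenspace of $E$ for $\theta$ (including $0$). $\otimes$ is the Kronecker product. *)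

From HB Require Import structures.
From mathcomp Require Import all_boot all_order all_algebra.
From mathcomp Require Import all_classical all_reals all_analysis.
From mathcomp Require Import complex mxtens.
Set Implicit Arguments. Unset Strict Implicit. Unset Printing Implicit Defensive.
Import Order.TTheory GRing.Theory Num.Theory.
Import numFieldNormedType.Exports.
Local Open Scope ring_scope.

Definition expm (R : realType) (n : nat) (A : 'M[R]_n) (t : R) : 'M[R]_n :=
  limn (series (fun k : nat => (t ^+ k / (k`!)%:R) *: A ^+ k)).

Definition int_expm (R : realType) (n : nat) (A : 'M[R]_n) (h : R) : 'M[R]_n :=
  \matrix_(i, j) Rintegral lebesgue_measure `[0, h]%classic
                   (fun tau : R => expm A tau i j).

Definition cmx (R : rcfType) (m n : nat) (M : 'M[R]_(m, n)) : 'M[R[i]]_(m, n) :=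
  map_mx (fun x : R => (x%:C)%C) M.

Definition ctrb_pair (K : fieldType) (q s : nat)
    (F : 'M[K]_q) (G : 'M[K]_(q, s)) : Prop :=
  forall z : K, \rank (row_mx (z%:M - F) G) = q.

Definition left_eigsp (K : fieldType) (q : nat) (theta : K) (E : 'M[K]_q)
    (xi : 'rV[K]_q) : Prop :=
  xi *m E = theta *: xi.

Fixpoint traj (R : pzRingType) (d r : nat) (Phi : 'M[R]_d) (Psi : 'M[R]_(d, r))
    (X0 : 'cV[R]_d) (U : nat -> 'cV[R]_r) (k : nat) : 'cV[R]_d :=
  match k with
  | 0 => X0
  | k'.+1 => Phi *m traj Phi Psi X0 U k' + Psi *m U k'
  end.

Definition ctrb_system (R : pzRingType) (d r : nat)
    (Phi : 'M[R]_d) (Psi : 'M[R]_(d, r)) : Prop :=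
  forall X0 : 'cV[R]_d, exists (K : nat) (U : nat -> 'cV[R]_r),
    traj Phi Psi X0 U K = 0.

Definition diag01 (R : pzRingType) (N : nat) (delta : 'I_N -> bool) : 'M[R]_N :=
  diag_mx (\row_i (delta i)%:R).

(* By the PBH test it suffices that every complex left eigenvector z of Phi_s
   with z Psi_s = 0 vanishes: a nonzero real row vector annihilating all
   Phi_s^k Psi_s would yield such a z (the annihilator is Phi_s-invariant and
   C is algebraically closed), so the Krylov matrix
   [Psi_s, ..., Phi_s^(d-1) Psi_s], d the degree of the minimal polynomial,
   has full rank and every state is driven to 0 in d steps.
   Expanding z = sum_k v_k (x) xi_k along the basis of left eigenvectors of W,
   the relation v_k W = lambda_k v_k decouples z Phi_s = theta z into
   xi_k E_k = theta xi_k.  If two or more xi_k are nonzero, (3) forbids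
   z Psi_s = 0; if only xi_k is, z Psi_s = (v_k Delta) (x) (xi_k B(h)) vanishes
   only if v_k Delta = 0 or xi_k B(h) = 0, excluded by (1) and (2). *)

From HB Require Import structures.
From mathcomp Require Import all_boot all_order all_algebra.
From mathcomp Require Import all_classical all_reals all_analysis.
From mathcomp Require Import complex mxtens.
From mathcomp Require Import zify.
Set Implicit Arguments. Unset Strict Implicit. Unset Printing Implicit Defensive.
Import Order.TTheory GRing.Theory Num.Theory.
Local Open Scope ring_scope.

Section Kronecker.
Variable R : comPzRingType.

Lemma tensmxDr m n p q (A : 'M[R]_(m, n)) (B C : 'M[R]_(p, q)) :
  A *t (B + C) = A *t B + A *t C.
Proof. by apply/matrixP=> i j; rewrite !mxE mulrDr. Qed.

Lemma tensmxZl m n p q c (A : 'M[R]_(m, n)) (B : 'M[R]_(p, q)) :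
  (c *: A) *t B = c *: (A *t B).
Proof. by apply/matrixP=> i j; rewrite !mxE mulrA. Qed.

Lemma tensmxZr m n p q c (A : 'M[R]_(m, n)) (B : 'M[R]_(p, q)) :
  A *t (c *: B) = c *: (A *t B).
Proof. by apply/matrixP=> i j; rewrite !mxE mulrCA. Qed.

Lemma tensmx11 m n : (1%:M : 'M[R]_m) *t (1%:M : 'M[R]_n) = 1%:M.
Proof.
apply/matrixP=> i j.
case: (mxtens_indexP i) => i0 i1; case: (mxtens_indexP j) => j0 j1.
rewrite tensmxE !mxE (can_eq (@mxtens_indexK _ _)) xpair_eqE.
by case: (i0 == j0); case: (i1 == j1); rewrite ?mulr1 ?mulr0.
Qed.

Lemma mul_tens_eigen N n (x : 'rV[R]_N) (W : 'M[R]_N) (lam : R)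
    (xi : 'rV[R]_n) (A0 A1 : 'M[R]_n) :
  x *m W = lam *: x ->
  (x *t xi) *m (1%:M *t A0 + W *t A1) = x *t (xi *m (A0 + lam *: A1)).
Proof.
move=> xW.
by rewrite mulmxDr !tensmx_mul mulmx1 xW mulmxDr -scalemxAr tensmxDr tensmxZl tensmxZr.
Qed.

End Kronecker.

Lemma tensmx_eq0 (R : idomainType) m n p q (A : 'M[R]_(m, n)) (B : 'M[R]_(p, q)) :
  (A *t B == 0) = (A == 0) || (B == 0).
Proof.
apply/idP/idP => [/eqP AB0|]; last by case/orP=> /eqP->; rewrite ?tens0mx ?tensmx0.
have [//|/matrix0Pn[i [j Aij]]] /= := eqVneq A 0; apply/eqP/matrixP=> k l.
move/matrixP: AB0 => /(_ (mxtens_index (i, k)) (mxtens_index (j, l))).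
by rewrite tensmxE !mxE => /eqP; rewrite mulf_eq0 (negbTE Aij) => /eqP.
Qed.

Section RowBasisTensor.
Variables (F : fieldType) (N n : nat) (v : 'M[F]_N).
Hypothesis v_unit : v \in unitmx.

Lemma sum_delta_tensE (xi : 'I_N -> 'rV[F]_n) (i : 'I_(1 * 1)) k j :
  (\sum_l (delta_mx 0 l : 'rV_N) *t xi l) i (mxtens_index (k, j)) = xi k 0 j.
Proof.
case: (mxtens_indexP i) => i0 i1; rewrite [i0]ord1 [i1]ord1 summxE (bigD1 k) //=.
rewrite big1 => [|l /negbTE lk].
  by rewrite tensmxE !mxE !eqxx mul1r addr0.
by rewrite tensmxE !mxE [k == l]eq_sym lk mul0r.
Qed.

Lemma sum_tens_rows_decomp (z : 'rV[F]_(N * n)) :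
  exists xi : 'I_N -> 'rV[F]_n, z = \sum_k row k v *t xi k.
Proof.
pose w := z *m (invmx v *t 1%:M); pose xi k := \row_j w 0 (mxtens_index (k, j)).
have w_sum : w = \sum_k (delta_mx 0 k : 'rV_N) *t xi k.
  apply/matrixP=> i c; case: (mxtens_indexP c) => k j.
  by rewrite sum_delta_tensE [RHS]mxE (ord1 i).
exists xi; have -> : z = w *m (v *t 1%:M).
  by rewrite -mulmxA tensmx_mul mulVmx // mulmx1 tensmx11 mulmx1.
rewrite w_sum mulmx_suml; apply: eq_bigr => k _.
by rewrite rowE -[xi k in RHS]mulmx1; apply: (@tensmx_mul _ 1 N 1 n N n).
Qed.

Lemma sum_tens_rows_inj (xi eta : 'I_N -> 'rV[F]_n) :
  \sum_k row k v *t xi k = \sum_k row k v *t eta k -> xi =1 eta.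
Proof.
have toDelta (zeta : 'I_N -> 'rV[F]_n) :
    (\sum_k row k v *t zeta k) *m (invmx v *t 1%:M)
    = \sum_k (delta_mx 0 k : 'rV_N) *t zeta k.
  by rewrite mulmx_suml; apply: eq_bigr => k _; rewrite tensmx_mul rowE mulmxK // mulmx1.
move=> /(congr1 (mulmx^~ (invmx v *t 1%:M))); rewrite !toDelta => /matrixP eq_sum k.
by apply/rowP=> j; have := eq_sum 0 (mxtens_index (k, j)); rewrite !sum_delta_tensE.
Qed.

End RowBasisTensor.

Lemma trajE (R : pzRingType) d r (P : 'M[R]_d) (Q : 'M[R]_(d, r)) X0 U K :
  traj P Q X0 U K = P ^+ K *m X0 + \sum_(i < K) P ^+ i *m Q *m U (K.-1 - i)%N.
Proof.
have mulP k : P *m P ^+ k = P ^+ k.+1 by rewrite exprS.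
elim: K => [|K IH] /=; first by rewrite expr0 mul1mx big_ord0 addr0.
rewrite IH mulmxDr mulmxA mulP big_ord_recl /= expr0 mul1mx subn0 -addrA.
congr (_ + _); rewrite addrC mulmx_sumr; congr (_ + _); apply: eq_bigr => i _.
by rewrite !mulmxA mulP /bump /=; congr (_ *m U _); lia.
Qed.

Lemma ctrb_system_of_reach (R : pzRingType) d r (P : 'M[R]_d) (Q : 'M[R]_(d, r)) K :
  (forall x : 'cV_d, exists u : 'I_K -> 'cV_r, x = \sum_(i < K) P ^+ i *m Q *m u i) ->
  ctrb_system P Q.
Proof.
move=> reach X0; have [u PX0] := reach (- (P ^+ K *m X0)).
exists K, (fun k => if insub (K.-1 - k)%N is Some i then u i else 0).
rewrite trajE -[X in _ + X = _](_ : - (P ^+ K *m X0) = _) ?addrN // PX0.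
apply: eq_bigr => i _; have -> : (K.-1 - (K.-1 - i) = i)%N by have := ltn_ord i; lia.
by rewrite valK.
Qed.

Lemma krylov_reach (F : fieldType) d r (P : 'M[F]_d) (Q : 'M[F]_(d, r)) K :
    (forall y : 'rV_d, (forall i : 'I_K, y *m P ^+ i *m Q = 0) -> y = 0) ->
  forall x : 'cV_d, exists u : 'I_K -> 'cV_r, x = \sum_(i < K) P ^+ i *m Q *m u i.
Proof.
pose Ctrb := \mxrow_(i < K) (P ^+ i *m Q).
move=> annih0 x; have /row_freeP[Z CZ] : row_free Ctrb.
  apply: inj_row_free => y yC; apply: annih0 => i.
  by rewrite -mulmxA -(mxrowK (fun i => y *m (P ^+ i *m Q)) i) -mul_mxrow yC submxrow0.
exists (submxcol (Z *m x)); rewrite -mul_mxrow_mxcol submxcolK mulmxA CZ.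
by rewrite mul1mx.
Qed.

Lemma mxpow_in_minpoly_span (F : fieldType) d (P : 'M[F]_d.+1) k :
  exists c : 'I_(degree_mxminpoly P) -> F, P ^+ k = \sum_i c i *: P ^+ i.
Proof.
have /submxP[c Pk] := horner_mx_mem P 'X^k.
exists (c 0); apply: (can_inj (@mxvecK _ _ _)).
rewrite rmorphXn /= horner_mx_X in Pk.
rewrite Pk linear_sum mulmx_sum_row; apply: eq_bigr => i _.
by rewrite rowK linearZ.
Qed.

Lemma ctrb_system_of_annihilator (F : fieldType) d r (P : 'M[F]_d) (Q : 'M[F]_(d, r)) :
  (forall y : 'rV_d, (forall k, y *m P ^+ k *m Q = 0) -> y = 0) -> ctrb_system P Q.
Proof.
case: d P Q => [|d] P Q annih0.
  by move=> X0; exists 0%N, (fun=> 0); rewrite flatmx0.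
apply: (ctrb_system_of_reach (K := degree_mxminpoly P)).
apply: krylov_reach => y yPQ; apply: annih0 => k.
have [c ->] := mxpow_in_minpoly_span P k.
rewrite mulmx_sumr mulmx_suml big1 // => i _.
by rewrite -scalemxAr -scalemxAl yPQ scaler0.
Qed.

Lemma annihilator_left_eigenvector (F : closedFieldType) d r
    (P : 'M[F]_d) (Q : 'M[F]_(d, r)) (y : 'rV_d) :
  y != 0 -> (forall k, y *m P ^+ k *m Q = 0) ->
  exists a (z : 'rV_d), [/\ z != 0, z *m P = a *: z & z *m Q = 0].
Proof.
case: d => [|d] in P Q y *; first by rewrite thinmx0 eqxx.
have [s charP] := closed_field_poly_normal (char_poly P).
rewrite (monicP (char_poly_monic P)) scale1r in charP.
move=> y0 yPQ; have: y *m horner_mx P (char_poly P) = 0.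
  by rewrite Cayley_Hamilton mulmx0.
rewrite charP {charP}; elim: s y y0 yPQ => [|a s IHs] y y0 yPQ.
  by rewrite big_nil rmorph1 mulmx1 => y_eq0; rewrite y_eq0 eqxx in y0.
rewrite big_cons rmorphM rmorphB /= horner_mx_X horner_mx_C -mulmxE mulmxA.
have [yPa|yPa0] := eqVneq (y *m (P - a%:M)) 0.
  exists a, y; split=> //; last by have := yPQ 0%N; rewrite expr0 mulmx1.
  by move/eqP: yPa; rewrite mulmxBr mul_mx_scalar subr_eq0 => /eqP.
apply: IHs yPa0 _ => k.
rewrite mulmxBr mul_mx_scalar !mulmxBl -!scalemxAl yPQ scaler0 subr0.
by have := yPQ k.+1; rewrite exprS -mulmxE !mulmxA.
Qed.

Lemma cmx1 (R : rcfType) d : cmx (1%:M : 'M[R]_d) = 1%:M.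
Proof. exact: (map_mx1 (real_complex R)). Qed.

Lemma cmxD (R : rcfType) m n (A B : 'M[R]_(m, n)) : cmx (A + B) = cmx A + cmx B.
Proof. exact: (map_mxD (real_complex R)). Qed.

Lemma cmxM (R : rcfType) m n q (A : 'M[R]_(m, n)) (B : 'M[R]_(n, q)) :
  cmx (A *m B) = cmx A *m cmx B.
Proof. exact: (map_mxM (real_complex R)). Qed.

Lemma cmxX (R : rcfType) d (P : 'M[R]_d) k : cmx (P ^+ k) = cmx P ^+ k.
Proof.
elim: k => [|k IHk]; first by rewrite !expr0 cmx1.
by rewrite !exprS -!mulmxE -IHk -cmxM.
Qed.

Lemma cmx_tens (R : rcfType) m n q s (A : 'M[R]_(m, n)) (B : 'M[R]_(q, s)) :
  cmx (A *t B) = cmx A *t cmx B.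
Proof. exact: (map_mxT (real_complex R)). Qed.

Lemma ctrb_system_of_complex_pbh (R : rcfType) d r (P : 'M[R]_d) (Q : 'M[R]_(d, r)) :
    (forall (a : R[i]) (z : 'rV_d), z *m cmx P = a *: z -> z *m cmx Q = 0 -> z = 0) ->
  ctrb_system P Q.
Proof.
move=> pbh; apply: ctrb_system_of_annihilator => y yPQ.
apply/eqP; apply: contraT => y0.
have cy0 : cmx y != 0 by rewrite /cmx map_mx_eq0.
have [|a [z [z0 zP zQ]]] := annihilator_left_eigenvector (P := cmx P) (Q := cmx Q) cy0.
  by move=> k; rewrite -cmxX -!cmxM yPQ /cmx map_mx0.
by rewrite (pbh a z zP zQ) eqxx in z0.
Qed.

Lemma ctrb_pair_left_eigen_eq0 (F : fieldType) q s (E : 'M[F]_q) (G : 'M[F]_(q, s))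
    a (x : 'rV_q) :
  ctrb_pair E G -> x *m E = a *: x -> x *m G = 0 -> x = 0.
Proof.
move=> ctrbEG xE xG.
have free : row_free (row_mx (a%:M - E) G) by rewrite /row_free ctrbEG.
apply/eqP; rewrite -(mulmx_free_eq0 x free) mul_mx_row mulmxBr mul_mx_scalar xE.
by rewrite subrr xG row_mx0.
Qed.

Lemma row_unitmx_neq0 (F : fieldType) N (v : 'M[F]_N) k : v \in unitmx -> row k v != 0.
Proof.
move=> v_unit; rewrite rowE mulmx_free_eq0 ?row_free_unit //.
by apply/eqP => /rowP/(_ k); rewrite !mxE !eqxx => /eqP; rewrite oner_eq0.
Qed.

Section NetworkPBH.
Variables (F : fieldType) (N n p : nat).
Variables (W D v : 'M[F]_N) (lambda : 'I_N -> F).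
Variables (A0 A1 : 'M[F]_n) (B0 : 'M[F]_(n, p)).
Hypothesis v_unit : v \in unitmx.
Hypothesis v_eigen : forall k, row k v *m W = lambda k *: row k v.

Let E k := A0 + lambda k *: A1.
Let Phi := (1%:M : 'M[F]_N) *t A0 + W *t A1.
Let Psi := D *t B0.

Lemma network_left_eigen_blocks a (z : 'rV_(N * n)) :
  z *m Phi = a *: z ->
  exists xi : 'I_N -> 'rV_n,
    z = \sum_k row k v *t xi k /\ forall k, xi k *m E k = a *: xi k.
Proof.
have [xi ->] := sum_tens_rows_decomp v_unit z.
move=> zPhi; exists xi; split=> //.
apply: (sum_tens_rows_inj v_unit (xi := fun k => xi k *m E k)
                                 (eta := fun k => a *: xi k)).
rewrite -(eq_bigr _ (fun k _ => mul_tens_eigen (xi k) A0 A1 (v_eigen k))).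
by rewrite -mulmx_suml zPhi scaler_sumr; apply: eq_bigr => l _; rewrite tensmxZr.
Qed.

Lemma network_pbh :
  ctrb_pair W D ->
  (forall k, ctrb_pair (E k) B0) ->
  (forall (theta : F) (S : {set 'I_N}),
      (1 < #|S|)%N ->
      (forall k, k \in S -> eigenvalue (E k) theta) ->
      forall xi : 'I_N -> 'rV_n,
        (forall k, k \in S -> left_eigsp theta (E k) (xi k)) ->
        (exists2 k, k \in S & xi k != 0) ->
        (\sum_(k in S) (row k v *t xi k)) *m Psi != 0) ->
  forall a (z : 'rV_(N * n)), z *m Phi = a *: z -> z *m Psi = 0 -> z = 0.
Proof.
move=> ctrbWD ctrbE separated a z /network_left_eigen_blocks[xi [z_sum xiE]] zPsi.
pose S := [set k | xi k != 0].
have {}z_sum : z = \sum_(k in S) row k v *t xi k.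
  rewrite z_sum [RHS]big_mkcond; apply: eq_bigr => k _; rewrite inE.
  by case: eqP => // ->; rewrite tensmx0.
have [S0|[k1 k1S]] := set_0Vmem S; first by rewrite z_sum S0 big_set0.
have [S_gt1|S_le1] := ltnP 1 #|S|.
  have S_eigen k : k \in S -> eigenvalue (E k) a.
    by rewrite inE => xik0; apply/eigenvalueP; exists (xi k).
  have S_nz : exists2 k, k \in S & xi k != 0 by exists k1 => //; rewrite inE in k1S.
  have := separated a S S_gt1 S_eigen xi (fun k _ => xiE k) S_nz.
  by rewrite -z_sum zPsi eqxx.
have S1 : S = [set k1].
  by apply/setP => k; rewrite (card_le1P S_le1 k1 k1S) inE.
(* Kronecker products of row vectors have [1 * 1] rows, not [1], hence the
   explicit dimensions. *)
move: zPsi; rewrite z_sum S1 big_set1 (@tensmx_mul _ 1 N 1 n N p) => /eqP.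
rewrite (@tensmx_eq0 _ 1 N 1 p).
case/orP=> /eqP vD0.
  have := row_unitmx_neq0 k1 v_unit.
  by rewrite (ctrb_pair_left_eigen_eq0 ctrbWD (v_eigen k1) vD0) eqxx.
by move: k1S; rewrite inE (ctrb_pair_left_eigen_eq0 (ctrbE k1) (xiE k1) vD0) eqxx.
Qed.

End NetworkPBH.

Theorem theorem2 (R : realType) (N n m p : nat)
  (A : 'M[R]_n) (B : 'M[R]_(n, p)) (C : 'M[R]_(m, n)) (H : 'M[R]_(n, m))
  (W : 'M[R]_N) (delta : 'I_N -> bool) (h : R)
  (v : 'M[R[i]]_N) (lambda : 'I_N -> R[i]) :
  (0 < N)%N -> (0 < n)%N -> (0 < m)%N -> (0 < p)%N ->
  (forall i : 'I_N, W i i = 0) ->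
  0 < h ->
  (* W diagonalizable: the rows v_1..v_N of v are linearly independent
     left eigenvectors, v_k W = lambda_k v_k *)
  v \in unitmx ->
  (forall k : 'I_N, row k v *m cmx W = lambda k *: row k v) ->
  let Bh := int_expm A h *m B in
  let Hh := int_expm A h *m (H *m C) in
  let Phi_s := (1%:M : 'M[R]_N) *t expm A h + W *t Hh in
  let Psi_s := (diag01 R delta) *t Bh in
  let E := fun k : 'I_N => cmx (expm A h) + lambda k *: cmx Hh in
  (* (1) *)
  ctrb_pair (cmx W) (cmx (diag01 R delta)) ->
  (* (2) *)
  (forall k : 'I_N, ctrb_pair (E k) (cmx Bh)) ->
  (* (3) *)
  (forall (theta : R[i]) (S : {set 'I_N}),
      (1 < #|S|)%N ->
      (forall k, k \in S -> eigenvalue (E k) theta) ->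
      forall xi : 'I_N -> 'rV[R[i]]_n,
        (forall k, k \in S -> left_eigsp theta (E k) (xi k)) ->
        (exists2 k, k \in S & xi k != 0) ->
        (\sum_(k in S) (row k v *t xi k)) *m cmx Psi_s != 0) ->
  ctrb_system Phi_s Psi_s.
Proof.
move=> _ _ _ _ _ _ v_unit v_eigen Bh Hh Phi_s Psi_s E ctrbWD ctrbE separated.
apply: ctrb_system_of_complex_pbh.
have cPhi : cmx Phi_s = 1%:M *t cmx (expm A h) + cmx W *t cmx Hh.
  by rewrite cmxD !cmx_tens cmx1.
have cPsi : cmx Psi_s = cmx (diag01 R delta) *t cmx Bh by rewrite cmx_tens.
rewrite cPhi cPsi in separated *.
exact: network_pbh v_unit v_eigen ctrbWD ctrbE separated.
Qed.
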